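(* Let $m\neq n$ be positive integers and let $g,h$ be homeomorphisms of $\mathbb{R}$ satisfying $gh^mg^{-1}=h^n$. If $h$ has no fixed point, then $g$ has a fixed point. *)

From Stdlib Require Import Reals.
Open Scope R_scope.

Definition is_homeo (f finv : R -> R) : Prop :=
  continuity f /\ continuity finv /\
  (forall x, finv (f x) = x) /\ (forall y, f (finv y) = y).

Definition iterR (k : nat) (f : R -> R) : R -> R := Nat.iter k f.

(** A fixed-point-free homeomorphism of R lies strictly above or strictly
    below the identity.  Inverting g (which swaps m and n), inverting h, and
    conjugating everything by x |-> -x reduce the theorem to the case
    h > id, g > id, m > n.  There the iterates of h escape to +oo, and
    g h^(mc) = h^(nc) g for every c; choosing c with g 0 < h^c 0 yields
    h^(nc) (g 0) < h^(nc+c) 0 <= h^(mc) 0 < g (h^(mc) 0) = h^(nc) (g 0). *)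

From Stdlib Require Import Reals Lra Lia Classical.
Open Scope R_scope.

Lemma fixpoint_free_cases (f : R -> R) :
  continuity f -> (forall x, f x <> x) ->
  (forall x, x < f x) \/ (forall x, f x < x).
Proof.
  intros Hf Hfix.
  assert (Hd : continuity (fun x => f x - x)).
  { apply continuity_minus; [exact Hf | exact (derivable_continuous _ derivable_id)]. }
  assert (Hsame : forall x y, x <= y -> 0 < (f x - x) * (f y - y)).
  { intros x y Hxy.
    destruct (Rlt_dec 0 ((f x - x) * (f y - y))) as [Hpos | Hnpos]; [exact Hpos |].
    destruct (IVT_cor _ x y Hd Hxy) as [z [_ Hz]]; [lra |].
    exfalso; apply (Hfix z); lra. }
  assert (Hsign : forall x, 0 < (f x - x) * (f 0 - 0)).
  { intros x; destruct (Rle_dec x 0).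
    - now apply Hsame.
    - rewrite Rmult_comm; apply Hsame; lra. }
  assert (H0 := Hfix 0).
  destruct (Rlt_dec 0 (f 0)) as [Hpos | Hnpos].
  - left; intros x; specialize (Hsign x); nra.
  - right; intros x; specialize (Hsign x).
    assert (f 0 < 0) by lra; nra.
Qed.

Lemma continuous_injective_above_id_increasing (f : R -> R) :
  continuity f -> (forall x y, f x = f y -> x = y) -> (forall x, x < f x) ->
  forall x y, x < y -> f x < f y.
Proof.
  intros Hf Hinj Hup x y Hxy.
  destruct (Rtotal_order (f x) (f y)) as [Hlt | [Heq | Hgt]]; [exact Hlt | |].
  - apply Hinj in Heq; lra.
  - exfalso.
    (* f - f x changes sign on [y, t], so f takes the value f x to the right of x *)
    set (t := Rmax y (f x)).
    assert (Hyt : y <= t) by apply Rmax_l.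
    assert (Hxt : f x <= t) by apply Rmax_r.
    assert (Ht := Hup t).
    assert (Hd : continuity (fun z => f z - f x)).
    { apply continuity_minus; [exact Hf | now apply continuity_const]. }
    destruct (IVT_cor _ y t Hd Hyt) as [w [Hw Hfw]].
    + assert (0 <= (f x - f y) * (f t - f x)) by (apply Rmult_le_pos; lra); nra.
    + assert (w = x) by (apply Hinj; lra); lra.
Qed.

Lemma iterR_add (p q : nat) (f : R -> R) (x : R) :
  iterR (p + q) f x = iterR p f (iterR q f x).
Proof. apply Nat.iter_add. Qed.

Lemma iterR_increasing (f : R -> R) :
  (forall x y, x < y -> f x < f y) ->
  forall k x y, x < y -> iterR k f x < iterR k f y.
Proof. intros Hf k; induction k as [|k IH]; intros x y Hxy; simpl; auto. Qed.

Lemma iterR_ge_id (f : R -> R) :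
  (forall x, x < f x) -> forall k x, x <= iterR k f x.
Proof.
  intros Hup k x; induction k as [|k IH]; simpl; [lra |].
  specialize (Hup (iterR k f x)); unfold iterR in *; lra.
Qed.

Lemma iterR_unbounded (f : R -> R) :
  continuity f -> (forall x, x < f x) ->
  forall x y, exists k, y < iterR k f x.
Proof.
  intros Hf Hup x y.
  apply NNPP; intros Hno.
  assert (Hbound : forall k, iterR k f x <= y).
  { intros k; apply Rnot_lt_le; intros Hk; apply Hno; now exists k. }
  destruct (growing_cv (fun k => iterR k f x)) as [l Hl].
  - intros k; apply Rlt_le, Hup.
  - exists y; intros z [k ->]; apply Hbound.
  - (* the limit of the orbit would be a fixed point *)
    assert (Himg := continuity_seq f _ l (Hf l) Hl).
    assert (Hshift : Un_cv (fun k => f (iterR k f x)) l).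
    { intros eps Heps; destruct (Hl eps Heps) as [N HN].
      exists N; intros k Hk; apply (HN (S k)); lia. }
    assert (f l = l) by (eapply UL_sequence; eauto).
    specialize (Hup l); lra.
Qed.

Lemma iterR_cancel (f finv : R -> R) :
  (forall x, finv (f x) = x) -> forall k x, iterR k finv (iterR k f x) = x.
Proof.
  intros Hcan k; induction k as [|k IH]; intros x; [reflexivity |].
  unfold iterR in *; rewrite Nat.iter_succ_r; simpl; rewrite Hcan; apply IH.
Qed.

Definition mirror (f : R -> R) : R -> R := fun x => - f (- x).

Lemma iterR_mirror (f : R -> R) (k : nat) (x : R) :
  iterR k (mirror f) x = - iterR k f (- x).
Proof.
  induction k as [|k IH]; simpl; [lra |].
  unfold iterR in *; simpl; rewrite IH; unfold mirror; now rewrite Ropp_involutive.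
Qed.

Lemma mirror_above_id (f : R -> R) :
  (forall x, f x < x) -> forall x, x < mirror f x.
Proof. intros Hdown x; unfold mirror; specialize (Hdown (- x)); lra. Qed.

Lemma mirror_fixpoint_free (f : R -> R) :
  (forall x, f x <> x) -> forall x, mirror f x <> x.
Proof. intros Hfix x Hx; apply (Hfix (- x)); unfold mirror in Hx; lra. Qed.

Lemma continuity_mirror (f : R -> R) : continuity f -> continuity (mirror f).
Proof.
  intros Hf; apply continuity_opp.
  apply (continuity_comp (fun x => - x) f); [| exact Hf].
  apply continuity_opp, derivable_continuous, derivable_id.
Qed.

Lemma is_homeo_sym (f finv : R -> R) : is_homeo f finv -> is_homeo finv f.
Proof. intros [Hf [Hfinv [Hl Hr]]]; now repeat split. Qed.

Lemma is_homeo_mirror (f finv : R -> R) :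
  is_homeo f finv -> is_homeo (mirror f) (mirror finv).
Proof.
  intros [Hf [Hfinv [Hl Hr]]].
  repeat split.
  - now apply continuity_mirror.
  - now apply continuity_mirror.
  - intros x; unfold mirror; rewrite Ropp_involutive, Hl; lra.
  - intros y; unfold mirror; rewrite Ropp_involutive, Hr; lra.
Qed.

Lemma is_homeo_inv_below_id (f finv : R -> R) :
  is_homeo f finv -> (forall x, x < f x) -> forall x, finv x < x.
Proof. intros [_ [_ [_ Hr]]] Hup x; specialize (Hup (finv x)); rewrite Hr in Hup; lra. Qed.

Lemma is_homeo_inv_above_id (f finv : R -> R) :
  is_homeo f finv -> (forall x, f x < x) -> forall x, x < finv x.
Proof. intros [_ [_ [_ Hr]]] Hdown x; specialize (Hdown (finv x)); rewrite Hr in Hdown; lra. Qed.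

Lemma is_homeo_increasing_of_above_id (f finv : R -> R) :
  is_homeo f finv -> (forall x, x < f x) -> forall x y, x < y -> f x < f y.
Proof.
  intros [Hf [_ [Hl _]]] Hup; apply continuous_injective_above_id_increasing; auto.
  intros x y Hxy; now rewrite <- (Hl x), <- (Hl y), Hxy.
Qed.

Definition pow_conj (g h : R -> R) (m n : nat) : Prop :=
  forall x, g (iterR m h x) = iterR n h (g x).

Lemma pow_conj_mul (g h : R -> R) (m n : nat) :
  pow_conj g h m n -> forall c x, g (iterR (m * c) h x) = iterR (n * c) h (g x).
Proof.
  intros Hgh c; induction c as [|c IH]; intros x.
  - now rewrite !Nat.mul_0_r.
  - replace (m * S c)%nat with (m * c + m)%nat by lia.
    replace (n * S c)%nat with (n * c + n)%nat by lia.
    now rewrite !iterR_add, IH, Hgh.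
Qed.

Lemma pow_conj_inv_l (g ginv h : R -> R) (m n : nat) :
  is_homeo g ginv -> pow_conj g h m n -> pow_conj ginv h n m.
Proof.
  intros [_ [_ [Hl Hr]]] Hgh x.
  rewrite <- (Hr x) at 1; now rewrite <- Hgh, Hl.
Qed.

Lemma pow_conj_inv_r (g h hinv : R -> R) (m n : nat) :
  is_homeo h hinv -> pow_conj g h m n -> pow_conj g hinv m n.
Proof.
  intros [_ [_ [Hl Hr]]] Hgh x.
  set (y := iterR m hinv x).
  assert (Hy : x = iterR m h y) by (symmetry; now apply iterR_cancel).
  rewrite Hy at 1; rewrite Hgh; symmetry; now apply iterR_cancel.
Qed.

Lemma pow_conj_mirror (g h : R -> R) (m n : nat) :
  pow_conj g h m n -> pow_conj (mirror g) (mirror h) m n.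
Proof.
  intros Hgh x; rewrite !iterR_mirror; unfold mirror.
  now rewrite !Ropp_involutive, Hgh.
Qed.

Lemma no_pow_conj_above_id (g h : R -> R) (m n : nat) :
  continuity h -> (forall x y, x < y -> h x < h y) -> (forall x, x < h x) ->
  (forall x, x < g x) -> (n < m)%nat -> ~ pow_conj g h m n.
Proof.
  intros Hh Hinc Hup Hg Hnm Hgh.
  destruct (iterR_unbounded h Hh Hup 0 (g 0)) as [c Hc].
  assert (Hgrow := Hg (iterR (m * c) h 0)).
  rewrite (pow_conj_mul g h m n Hgh) in Hgrow.
  assert (Hlt := iterR_increasing h Hinc (n * c) _ _ Hc).
  rewrite <- iterR_add in Hlt.
  assert (Hle := iterR_ge_id h Hup (m * c - (n * c + c)) (iterR (n * c + c) h 0)).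
  rewrite <- iterR_add in Hle.
  replace (m * c - (n * c + c) + (n * c + c))%nat with (m * c)%nat in Hle by nia.
  lra.
Qed.

Lemma no_pow_conj_both_above_id (g ginv h hinv : R -> R) (m n : nat) :
  is_homeo g ginv -> is_homeo h hinv -> (forall x, x < h x) ->
  (forall x, x < g x) -> m <> n -> ~ pow_conj g h m n.
Proof.
  intros Hg Hh Hhup Hgup Hmn Hgh.
  destruct (Nat.lt_gt_cases m n) as [[Hlt | Hgt] _]; [exact Hmn | |].
  - (* x |-> -x turns the inverses, which lie below id, into maps above id *)
    assert (Hm := is_homeo_mirror _ _ (is_homeo_sym _ _ Hh)).
    apply (no_pow_conj_above_id (mirror ginv) (mirror hinv) n m); auto.
    + apply Hm.
    + now apply (is_homeo_increasing_of_above_id _ _ Hm), mirror_above_id,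
        (is_homeo_inv_below_id h).
    + now apply mirror_above_id, (is_homeo_inv_below_id h).
    + now apply mirror_above_id, (is_homeo_inv_below_id g).
    + now apply pow_conj_mirror, (pow_conj_inv_r _ h), (pow_conj_inv_l g).
  - apply (no_pow_conj_above_id g h m n); auto.
    + apply Hh.
    + now apply (is_homeo_increasing_of_above_id h hinv).
Qed.

Lemma no_pow_conj_fixpoint_free (g ginv h hinv : R -> R) (m n : nat) :
  is_homeo g ginv -> is_homeo h hinv -> (forall x, x < h x) ->
  (forall x, g x <> x) -> m <> n -> ~ pow_conj g h m n.
Proof.
  intros Hg Hh Hhup Hfix Hmn Hgh.
  destruct (fixpoint_free_cases g (proj1 Hg) Hfix) as [Hgup | Hgdown].
  - exact (no_pow_conj_both_above_id g ginv h hinv m n Hg Hh Hhup Hgup Hmn Hgh).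
  - apply (no_pow_conj_both_above_id ginv g h hinv n m); auto.
    + now apply is_homeo_sym.
    + now apply (is_homeo_inv_above_id g).
    + now apply (pow_conj_inv_l g).
Qed.

Theorem lemma5p6 (m n : nat) (g ginv h : R -> R) :
  (0 < m)%nat -> (0 < n)%nat -> m <> n ->
  is_homeo g ginv -> (exists hinv, is_homeo h hinv) ->
  (forall x, g (iterR m h (ginv x)) = iterR n h x) ->
  (forall x, h x <> x) ->
  exists x, g x = x.
Proof.
  intros _ _ Hmn Hg [hinv Hh] Hrel Hhfix.
  apply NNPP; intros Hno.
  assert (Hgfix : forall x, g x <> x) by (intros x Hx; apply Hno; now exists x).
  assert (Hgh : pow_conj g h m n).
  { destruct Hg as [_ [_ [Hgl _]]]; intros x; now rewrite <- Hrel, Hgl. }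
  destruct (fixpoint_free_cases h (proj1 Hh) Hhfix) as [Hhup | Hhdown].
  - exact (no_pow_conj_fixpoint_free g ginv h hinv m n Hg Hh Hhup Hgfix Hmn Hgh).
  - apply (no_pow_conj_fixpoint_free (mirror g) (mirror ginv) (mirror h) (mirror hinv) m n).
    + now apply is_homeo_mirror.
    + now apply is_homeo_mirror.
    + now apply mirror_above_id.
    + now apply mirror_fixpoint_free.
    + exact Hmn.
    + now apply pow_conj_mirror.
Qed.
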